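(* Consider progressive filtering with an ensemble of $M$ selection strategies $s_1,\dots,s_M$, $R$ rounds, $J$ batches per strategy per round, sampling ratio $\alpha\in(0,1)$ and batch size $b$, starting from $\mathcal{C}_0=\mathcal{U}_t$. Let $\mathbf{x}\in\mathcal{U}_t$ be an $\epsilon$-uninformative instance. Then the probability that $\mathbf{x}$ survives all $R$ rounds satisfies $$\Pr(\mathbf{x}\in\mathcal{C}_R)\ \le\ \Big(1-(1-\alpha\epsilon)^{MJ}\Big)^R.$$ Moreover, for $\alpha\epsilon\ll \frac{1}{MJ}$ and large $R$, this probability decreases exponentially as $\mathcal{O}\big((MJ\alpha\epsilon)^R\big)$.
   Context: Setting (pool-based batch active learning). $\mathcal{U}_t$ is a finite unlabeled pool. A selection strategy $s$ is a (possibly randomized) map taking a finite set $\mathcal{P}$ of instances and a batch size $b$ to a subset $s(\mathcal{P},b)\subseteq\mathcal{P}$ of size $b$. Progressive filtering with strategies $s_1,\dots,s_M$, number of rounds $R$, number of batches per strategy $J$, and sampling ratio $\alpha\in(0,1)$ produces pools $\mathcal{C}_0=\mathcal{U}_t\supseteq \mathcal{C}_1\supseteq\dots\supseteq\mathcal{C}_R$ by $$\mathcal{C}_r=\bigcup_{m=1}^M\bigcup_{j=1}^J s_m\big(\mathrm{SubSample}(\mathcal{C}_{r-1},\alpha|\mathcal{C}_{r-1}|),\,b\big),$$ where each $\mathrm{SubSample}(\mathcal{C},n)$ draws $n$ instances of $\mathcal{C}$ uniformly at random without replacement, a fresh independent subsample being drawn for each of the $M\cdot J$ pairs $(m,j)$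 in each round, so that each fixed instance of $\mathcal{C}_{r-1}$ lies in a given subsample with probability $\alpha$, and the $M\cdot J$ draws of a round are independent. For an instance $\mathbf{x}$, let $p_{m,r}(\mathbf{x})$ denote the probability that strategy $s_m$ includes $\mathbf{x}$ in a selected batch during round $r$, given that $\mathbf{x}$ is present in the random subsample. An instance $\mathbf{x}\in\mathcal{U}_t$ is called $\epsilon$-uninformative if for all strategies $s_m$ and all rounds $r$, $p_{m,r}(\mathbf{x})\le\epsilon$. *)

From HB Require Import structures.
From mathcomp Require Import all_boot all_order all_algebra.
Unset Printing Implicit Defensive.
Import Order.TTheory GRing.Theory Num.Theory.
Local Open Scope ring_scope.

Section PF.
Variables (R : archiRealFieldType) (T : finType).

(* A (possibly randomized) selection strategy: given a finite pool P and a
   batch size b, [s P b] is a probability mass function on the selected batch,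
   supported on subsets of P of size b (of size #|P| when #|P| < b). *)
Definition strategy := {set T} -> nat -> {set T} -> R.

Definition is_strategy (s : strategy) : Prop :=
  forall (P : {set T}) (b : nat),
    (forall B, 0 <= s P b B) /\
    (\sum_(B : {set T}) s P b B = 1) /\
    (forall B, s P b B != 0 -> (B \subset P) /\ #|B| = minn b #|P|).

Definition SubSample (C : {set T}) (n : nat) (A : {set T}) : R :=
  if (A \subset C) && (#|A| == n) then ('C(#|C|, n))%:R^-1 else 0.

Definition ss_size (alpha : R) (C : {set T}) : nat := Num.truncn (alpha * #|C|%:R).

(* For each pair k = (m, j) an independent subsample S_k is drawn
   and s_m selects a batch B_k from it; C' is the union of the B_k. *)
Definition round_step (M J : nat) (s : 'I_M -> strategy) (alpha : R) (b : nat)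
    (C C' : {set T}) : R :=
  \sum_(f : {ffun 'I_M * 'I_J -> {set T} * {set T}}
          | C' == \bigcup_(k : 'I_M * 'I_J) (f k).2)
     \prod_(k : 'I_M * 'I_J)
        (SubSample C (ss_size alpha C) (f k).1 * s k.1 (f k).1 b (f k).2).

Fixpoint pool_dist (M J : nat) (s : 'I_M -> strategy) (alpha : R) (b : nat)
    (U : {set T}) (r : nat) (C' : {set T}) : R :=
  match r with
  | 0 => if C' == U then 1 else 0
  | r'.+1 => \sum_(C : {set T}) pool_dist M J s alpha b U r' C * round_step M J s alpha b C C'
  end.

Definition prob_in_pool (M J : nat) (s : 'I_M -> strategy) (alpha : R) (b : nat)
    (U : {set T}) (r : nat) (x : T) : R :=
  \sum_(C : {set T} | x \in C) pool_dist M J s alpha b U r C.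

(* p_{m,r}(x) conditioned on the current pool C_{r-1} = C: probability that
   s_m includes x in its batch, given that x lies in the random subsample of C.
   (Conditional probability with the convention 0/0 = 0.) *)
Definition p_sel (s : strategy) (alpha : R) (b : nat) (C : {set T}) (x : T) : R :=
  (\sum_(S : {set T} | x \in S)
      SubSample C (ss_size alpha C) S * \sum_(B : {set T} | x \in B) s S b B)
  / (\sum_(S : {set T} | x \in S) SubSample C (ss_size alpha C) S).

(* x is eps-uninformative: for all strategies m and all rounds r = 1..nR,
   p_{m,r}(x) <= eps, for every pool C_{r-1} that occurs with positive
   probability (i.e. conditionally on the history of the process). *)
Definition eps_uninformative (M J : nat) (s : 'I_M -> strategy) (alpha : R)
    (b : nat) (U : {set T}) (nR : nat) (eps : R) (x : T) : Prop :=
  forall (m : 'I_M) (r : nat), (r < nR)%N ->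
    forall C : {set T}, 0 < pool_dist M J s alpha b U r C ->
      p_sel (s m) alpha b C x <= eps.

End PF.

From HB Require Import structures.
From mathcomp Require Import all_boot all_order all_algebra.
From mathcomp Require Import lra.
Import Order.TTheory GRing.Theory Num.Theory.
Local Open Scope ring_scope.

(* Within one round the M*J draws are independent, and a single draw puts x
   into its batch with probability P(x in subsample) * p_{m,r}(x), which is at
   most alpha * eps when x is in the current pool and 0 otherwise.  Hence x
   survives a round with probability at most 1 - (1 - alpha eps)^(MJ), and
   conditioning on the pool round after round multiplies these bounds.  The
   second bound is Bernoulli's inequality (1 - alpha eps)^(MJ) >= 1 - MJ alpha eps. *)

Lemma bernoulli_ler {R : realDomainType} (x : R) (n : nat) :
  -1 <= x -> 1 + n%:R * x <= (1 + x) ^+ n.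
Proof.
move=> x_ge; elim: n => [|n IHn]; first by rewrite mul0r addr0 expr0.
have x1_ge0 : 0 <= 1 + x by rewrite -lerBlDl sub0r.
have nxx_ge0 : 0 <= n%:R * (x * x) by rewrite mulr_ge0 ?ler0n // -expr2 sqr_ge0.
rewrite exprSr -natr1; apply: le_trans (ler_wpM2r x1_ge0 IHn).
nra.
Qed.

Lemma sum_prod_bigcup_mem {R : comNzRingType} {T I A : finType}
    (w : I -> A -> R) (g : A -> {set T}) (x : T) :
  \sum_(f : {ffun I -> A} | x \in \bigcup_i g (f i)) \prod_i w i (f i) =
  \prod_i \sum_a w i a - \prod_i \sum_(a | x \notin g a) w i a.
Proof.
have miss_all : \prod_i \sum_(a | x \notin g a) w i a =
    \sum_(f : {ffun I -> A} | x \notin \bigcup_i g (f i)) \prod_i w i (f i).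
  rewrite bigA_distr_big; apply: eq_bigl => f.
  apply/ffun_onP/negP => [miss /bigcupP[i _ x_fi] | x_out i].
    by have /negP := miss i.
  by apply/negP => x_fi; apply: x_out; apply/bigcupP; exists i.
rewrite miss_all bigA_distr_bigA.
by rewrite [X in X - _](bigID (fun f : {ffun I -> A} => x \in \bigcup_i g (f i))) addrK.
Qed.

Section Subsample.
Context {R : archiRealFieldType} {T : finType}.
Implicit Types (C S : {set T}) (x : T) (n : nat).

Lemma SubSample_ge0 C n S : 0 <= SubSample R T C n S.
Proof. by rewrite /SubSample; case: ifP; rewrite ?invr_ge0 ?ler0n. Qed.

Lemma sum_SubSample_cond C n (P : pred {set T}) :
  \sum_(S : {set T} | P S) SubSample R T C n S =
  #|[set S : {set T} | P S & (S \subset C) && (#|S| == n)]|%:R / 'C(#|C|, n)%:R.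
Proof.
rewrite /SubSample -big_mkcondr -sumr_const mulr_suml.
by apply: eq_big => [S | S _]; rewrite ?inE ?mul1r.
Qed.

Lemma sum_SubSample C n : (n <= #|C|)%N -> \sum_(S : {set T}) SubSample R T C n S = 1.
Proof.
move=> n_le; rewrite sum_SubSample_cond.
have -> : [set S : {set T} | true & (S \subset C) && (#|S| == n)] =
    [set S : {set T} | S \subset C & #|S| == n] by apply/setP => S; rewrite !inE.
by rewrite cards_draws divff // pnatr_eq0 -lt0n bin_gt0.
Qed.

Lemma card_draws_mem C n x : x \in C ->
  (#|[set S : {set T} | x \in S & (S \subset C) && (#|S| == n)]| * #|C|
   = n * 'C(#|C|, n))%N.
Proof.
move=> xC.
have := cardsID [set S : {set T} | x \in S] [set S : {set T} | S \subset C & #|S| == n].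
have -> : [set S : {set T} | S \subset C & #|S| == n] :&: [set S : {set T} | x \in S] =
    [set S : {set T} | x \in S & (S \subset C) && (#|S| == n)].
  by apply/setP => S; rewrite !inE andbC.
have -> : [set S : {set T} | S \subset C & #|S| == n] :\: [set S : {set T} | x \in S] =
    [set S : {set T} | S \subset C :\ x & #|S| == n].
  by apply/setP => S; rewrite !inE subsetD1; case: (x \in S); rewrite ?andbF ?andbT.
rewrite !cards_draws (cardsD1 x C) xC.
case: n => [|n]; first by rewrite !bin0 addn1 => -[->].
by rewrite add1n binS addnC => /addnI ->; rewrite -binS mulnC mul_bin_diag.
Qed.

Lemma prob_mem_SubSample C n x : (n <= #|C|)%N -> x \in C ->
  \sum_(S : {set T} | x \in S) SubSample R T C n S = n%:R / #|C|%:R.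
Proof.
move=> n_le xC; rewrite sum_SubSample_cond.
have C_gt0 : (0 < #|C|)%N by apply/card_gt0P; exists x.
have binC_gt0 : (0 < 'C(#|C|, n))%N by rewrite bin_gt0.
apply: (canRL (mulfK _)); first by rewrite pnatr_eq0 -lt0n.
rewrite mulrAC -natrM card_draws_mem // natrM mulfK //.
by rewrite pnatr_eq0 -lt0n.
Qed.

Lemma prob_mem_SubSample_notin C n x : x \notin C ->
  \sum_(S : {set T} | x \in S) SubSample R T C n S = 0.
Proof.
move=> xNC; apply: big1 => S xS; rewrite /SubSample.
by case: ifP => // /andP[/subsetP/(_ x xS) xC]; rewrite xC in xNC.
Qed.

Lemma ss_size_le_card (alpha : R) C : alpha <= 1 -> (ss_size R T alpha C <= #|C|)%N.
Proof.
move=> alpha_le1; rewrite /ss_size truncn_le_nat.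
by apply: le_lt_trans (ler_piMl (ler0n _ _) alpha_le1) _; rewrite ltr_nat.
Qed.

Lemma prob_mem_SubSample_le (alpha : R) C x : 0 <= alpha <= 1 ->
  \sum_(S : {set T} | x \in S) SubSample R T C (ss_size R T alpha C) S
    <= (x \in C)%:R * alpha.
Proof.
move=> /andP[alpha_ge0 alpha_le1].
have [xC|xNC] := boolP (x \in C); last by rewrite prob_mem_SubSample_notin // mul0r.
rewrite prob_mem_SubSample ?ss_size_le_card // mul1r ler_pdivrMr ?ltr0n; last first.
  by apply/card_gt0P; exists x.
by rewrite truncn_le mulr_ge0.
Qed.

End Subsample.

Section Selection.
Context {R : archiRealFieldType} {T : finType}.

Definition draw_prob (st : strategy R T) (alpha : R) (b : nat) (C : {set T})
    (p : {set T} * {set T}) : R :=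
  SubSample R T C (ss_size R T alpha C) p.1 * st p.1 b p.2.

Variables (alpha : R) (b : nat) (C : {set T}).
Context {st : strategy R T}.
Hypotheses (st_strategy : is_strategy R T st).
Hypotheses (alpha_ge0 : 0 <= alpha) (alpha_le1 : alpha <= 1).

Lemma draw_prob_ge0 p : 0 <= draw_prob st alpha b C p.
Proof. by rewrite mulr_ge0 ?SubSample_ge0 //; case: (st_strategy p.1 b). Qed.

Lemma sum_draw_prob : \sum_(p : {set T} * {set T}) draw_prob st alpha b C p = 1.
Proof.
rewrite -(pair_bigA _ (fun S B => draw_prob st alpha b C (S, B))) /draw_prob /=.
under eq_bigr => S _ do rewrite -mulr_sumr (proj1 (proj2 (st_strategy S b))) mulr1.
by rewrite sum_SubSample // ss_size_le_card.
Qed.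

Lemma sum_draw_prob_mem (x : T) :
  \sum_(p : {set T} * {set T} | x \in p.2) draw_prob st alpha b C p =
  \sum_(S : {set T} | x \in S)
     SubSample R T C (ss_size R T alpha C) S * \sum_(B : {set T} | x \in B) st S b B.
Proof.
rewrite -(pair_big_dep xpredT (fun _ (B : {set T}) => x \in B)
            (fun S B => draw_prob st alpha b C (S, B))) /=.
rewrite (bigID (fun S : {set T} => x \in S)) /= [X in _ + X]big1 ?addr0.
  by apply: eq_bigr => S _; rewrite mulr_sumr.
move=> S xNS; apply: big1 => B xB; rewrite /draw_prob /=.
have [-> | st_neq0] := eqVneq (st S b B) 0; first by rewrite mulr0.
have [_ [_ /(_ B st_neq0) [/subsetP B_sub _]]] := st_strategy S b.
by rewrite B_sub in xNS.
Qed.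

Lemma sum_draw_prob_mem_le (x : T) (eps : R) :
  0 <= eps -> p_sel R T st alpha b C x <= eps ->
  \sum_(p : {set T} * {set T} | x \in p.2) draw_prob st alpha b C p
    <= (x \in C)%:R * (alpha * eps).
Proof.
move=> eps_ge0; rewrite sum_draw_prob_mem /p_sel.
set num := \sum_(S | _) _; set den := \sum_(S | _) _ => sel_le.
have num_le_den : num <= den.
  apply: ler_sum => S _; rewrite ler_piMr ?SubSample_ge0 //.
  have [st_ge0 [st_sum1 _]] := st_strategy S b.
  by rewrite -st_sum1 [leRHS](bigID (fun B : {set T} => x \in B)) /= lerDl sumr_ge0.
apply: (@le_trans _ _ (eps * den)).
  have [den0 | den_neq0] := eqVneq den 0; first by rewrite den0 mulr0 -den0.
  have den_gt0 : 0 < den.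
    by rewrite lt_def den_neq0 sumr_ge0 // => S _; exact: SubSample_ge0.
  by rewrite -ler_pdivrMr.
rewrite [leRHS]mulrA [leRHS]mulrC ler_wpM2l //.
by apply: prob_mem_SubSample_le; rewrite alpha_ge0.
Qed.

End Selection.

Section Filtering.
Context {R : archiRealFieldType} {T : finType}.
Variables (M J : nat) (s : 'I_M -> strategy R T) (alpha : R) (b : nat) (U : {set T}).
Hypothesis s_strategy : forall m, is_strategy R T (s m).
Hypotheses (alpha_ge0 : 0 <= alpha) (alpha_le1 : alpha <= 1).

Lemma prob_mem_round_step (C : {set T}) (x : T) :
  \sum_(C' : {set T} | x \in C') round_step R T M J s alpha b C C' =
  1 - \prod_(k : 'I_M * 'I_J)
        (1 - \sum_(p : {set T} * {set T} | x \in p.2) draw_prob (s k.1) alpha b C p).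
Proof.
have draw_sum1 (k : 'I_M * 'I_J) := sum_draw_prob alpha b C (s_strategy k.1) alpha_le1.
have miss_eq (k : 'I_M * 'I_J) :
    \sum_(p : {set T} * {set T} | x \notin p.2) draw_prob (s k.1) alpha b C p =
    1 - \sum_(p : {set T} * {set T} | x \in p.2) draw_prob (s k.1) alpha b C p.
  rewrite -(draw_sum1 k) [X in X - _](bigID (fun p : {set T} * {set T} => x \in p.2)) /=.
  by rewrite addrC addrK.
under [in RHS]eq_bigr => k _ do rewrite -miss_eq.
have prod_sum1 : \prod_(k : 'I_M * 'I_J) \sum_p draw_prob (s k.1) alpha b C p = 1.
  by apply: big1 => k _; apply: draw_sum1.
rewrite -[X in X - _]prod_sum1 -sum_prod_bigcup_mem.
rewrite [RHS](partition_big (fun f : {ffun _ -> _} => \bigcup_k (f k).2)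
                             (fun C' => x \in C')) //.
apply: eq_bigr => C' xC'; apply: eq_bigl => f.
by rewrite eq_sym; case: eqP => [->|_]; rewrite ?xC' ?andbF.
Qed.

Lemma prob_mem_round_step_le (C : {set T}) (x : T) (eps : R) :
  0 <= eps <= 1 -> (forall m, p_sel R T (s m) alpha b C x <= eps) ->
  \sum_(C' : {set T} | x \in C') round_step R T M J s alpha b C C'
    <= (x \in C)%:R * (1 - (1 - alpha * eps) ^+ (M * J)).
Proof.
move=> /andP[eps_ge0 eps_le1] sel_le; rewrite prob_mem_round_step.
set beta := (x \in C)%:R * (alpha * eps).
have beta_le1 : beta <= 1.
  by rewrite /beta; case: (x \in C); rewrite ?mul1r ?mul0r // mulr_ile1.
have hit_le (k : 'I_M * 'I_J) :
    \sum_(p : {set T} * {set T} | x \in p.2) draw_prob (s k.1) alpha b C p <= beta.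
  exact: sum_draw_prob_mem_le.
have : (1 - beta) ^+ (M * J) <= \prod_(k : 'I_M * 'I_J)
    (1 - \sum_(p : {set T} * {set T} | x \in p.2) draw_prob (s k.1) alpha b C p).
  have -> : (M * J)%N = #|{: 'I_M * 'I_J}| by rewrite card_prod !card_ord.
  by rewrite -prodr_const; apply: ler_prod => k _; rewrite subr_ge0 beta_le1 lerB.
rewrite /beta; case: (x \in C); rewrite ?mul1r ?mul0r ?subr0 ?expr1n; lra.
Qed.

Lemma pool_dist_ge0 r C : 0 <= pool_dist R T M J s alpha b U r C.
Proof.
elim: r C => [|r IHr] C /=; first by case: eqP.
apply: sumr_ge0 => C0 _; rewrite mulr_ge0 ?IHr //.
apply: sumr_ge0 => f _; apply: prodr_ge0 => k _.
exact: (draw_prob_ge0 alpha b C0 (s_strategy k.1)).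
Qed.

Lemma prob_in_pool0 x : prob_in_pool R T M J s alpha b U 0 x = (x \in U)%:R.
Proof.
rewrite /prob_in_pool /=; have [xU | xNU] := boolP (x \in U).
  by rewrite (bigD1 U) //= eqxx big1 ?addr0 // => C /andP[_ /negbTE ->].
by apply: big1 => C xC; case: eqP => // CU; rewrite -CU xC in xNU.
Qed.

Lemma prob_in_poolS r x :
  prob_in_pool R T M J s alpha b U r.+1 x =
  \sum_(C : {set T}) pool_dist R T M J s alpha b U r C *
    \sum_(C' : {set T} | x \in C') round_step R T M J s alpha b C C'.
Proof.
by rewrite /prob_in_pool /= exchange_big; apply: eq_bigr => C _; rewrite mulr_sumr.
Qed.

Lemma prob_in_pool_le nR (eps : R) x :
  0 <= eps <= 1 -> eps_uninformative R T M J s alpha b U nR eps x ->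
  prob_in_pool R T M J s alpha b U nR x <= (1 - (1 - alpha * eps) ^+ (M * J)) ^+ nR.
Proof.
move=> /andP[eps_ge0 eps_le1] x_uninf; set rho := 1 - _.
have rho_ge0 : 0 <= rho.
  have ae_le1 : alpha * eps <= 1 by rewrite mulr_ile1.
  by rewrite /rho subr_ge0 exprn_ile1 // ?subr_ge0 // gerBl mulr_ge0.
suff: forall r, (r <= nR)%N -> prob_in_pool R T M J s alpha b U r x <= rho ^+ r by apply.
elim=> [_ | r IHr lt_r_nR]; first by rewrite prob_in_pool0 expr0 lern1 leq_b1.
rewrite prob_in_poolS exprSr.
apply: (@le_trans _ _ (\sum_C pool_dist R T M J s alpha b U r C * ((x \in C)%:R * rho))).
  apply: ler_sum => C _.
  have := pool_dist_ge0 r C; rewrite le_eqVlt => /predU1P[<- | pd_gt0].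
    by rewrite !mul0r.
  rewrite ler_wpM2l ?pool_dist_ge0 // prob_mem_round_step_le ?eps_ge0 // => m.
  exact: x_uninf m r lt_r_nR C pd_gt0.
have -> : \sum_C pool_dist R T M J s alpha b U r C * ((x \in C)%:R * rho) =
    prob_in_pool R T M J s alpha b U r x * rho.
  rewrite /prob_in_pool mulr_suml [RHS]big_mkcond; apply: eq_bigr => C _.
  by case: (x \in C); rewrite ?mul1r ?mul0r ?mulr0 ?mulrA.
by rewrite ler_wpM2r // IHr // ltnW.
Qed.

End Filtering.

Theorem theorem2 (R : archiRealFieldType) (T : finType) (M J nR b : nat)
    (alpha eps : R) (s : 'I_M -> strategy R T) (U : {set T}) (x : T) :
  0 < alpha < 1 ->
  0 <= eps <= 1 ->
  (forall m, @is_strategy R T (s m)) ->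
  x \in U ->
  @eps_uninformative R T M J s alpha b U nR eps x ->
  @prob_in_pool R T M J s alpha b U nR x
    <= (1 - (1 - alpha * eps) ^+ (M * J)) ^+ nR
  /\ @prob_in_pool R T M J s alpha b U nR x
    <= ((M * J)%:R * alpha * eps) ^+ nR.
Proof.
move=> /andP[/ltW alpha_ge0 /ltW alpha_le1] eps01 s_strategy _ x_uninf.
have pool_le :=
  prob_in_pool_le _ _ _ _ _ _ s_strategy alpha_ge0 alpha_le1 _ _ _ eps01 x_uninf.
split=> //; apply: le_trans pool_le _.
have /andP[eps_ge0 eps_le1] := eps01.
have ae_ge0 : 0 <= alpha * eps by rewrite mulr_ge0.
have ae_le1 : alpha * eps <= 1 by rewrite mulr_ile1.
have bern : 1 + (M * J)%:R * - (alpha * eps) <= (1 - alpha * eps) ^+ (M * J).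
  by apply: bernoulli_ler; rewrite lerN2.
have pow_le1 : (1 - alpha * eps) ^+ (M * J) <= 1.
  by rewrite exprn_ile1 // ?subr_ge0 // gerBl.
apply: lerXn2r; rewrite ?nnegrE ?subr_ge0 // -?mulrA ?mulr_ge0 //; lra.
Qed.
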